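(* Let $n=\prod_{i=1}^{k}p_i^{t_i}$, where $p_1,\dots,p_k$ are distinct odd primes and $t_1,\dots,t_k\ge 0$ are integers. Then the lattice $\widetilde\Pi(D_n)$ is isomorphic to the direct product lattice $T(n)\times C_2$.
   Context: For a positive integer $n$, $D_n=\langle r,s\mid r^n=e,\ s^2=e,\ srs^{-1}=r^{-1}\rangle$ is the dihedral group of order $2n$. For a finite group $G$ and a subgroup $H\le G$, let $\pi_e(H)=\{o(x)\mid x\in H\}$. Let $\mathcal{L}(G)$ be the set of subgroups of $G$; define $H_1\equiv H_2$ iff $\pi_e(H_1)=\pi_e(H_2)$, with class $[H]$. The poset $\widetilde\Pi(G)$ is $\mathcal{L}(G)/\!\equiv$ ordered by $[H_1]\lesssim[H_2]$ iff $\pi_e(H_1)\subseteq\pi_e(H_2)$ (for $G=D_n$ this poset is a lattice). $T(n)$ denotes the lattice of positive divisors of $n$ ordered by divisibility, $C_2$ the two-element chain, and $T(n)\times C_2$ carries the componentwise order. *)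

From mathcomp Require Import all_boot all_fingroup.
Set Implicit Arguments. Unset Strict Implicit. Unset Printing Implicit Defensive.
Local Open Scope group_scope.

Definition pi_e (gT : finGroupType) (H : {set gT}) : seq nat :=
  [seq #[x] | x <- enum H].

Definition pi_le (gT : finGroupType) (H1 H2 : {set gT}) : Prop :=
  {subset pi_e H1 <= pi_e H2}.

Definition TC2_le (a b : nat * bool) : bool := (a.1 %| b.1) && (a.2 ==> b.2).

(* Pi~(G) is order-isomorphic to T(n) x C_2: there is a map f from subgroups
   of G to pairs (d, b) with d | n, which is surjective onto divisors x bool
   and reflects/preserves the order:  pi_e(H) <= pi_e(K) <-> f H <= f K.
   Such an f is constant on the classes [H] and induces an order isomorphism
   (hence lattice isomorphism) from Pi~(G) onto T(n) x C_2. *)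
Definition Pi_tilde_iso_TC2 (gT : finGroupType) (G : {group gT}) (n : nat) : Prop :=
  exists f : {group gT} -> nat * bool,
    [/\ forall H : {group gT}, H \subset G -> (f H).1 %| n,
        forall d b, d %| n -> exists2 H : {group gT}, H \subset G & f H = (d, b)
      & forall H K : {group gT}, H \subset G -> K \subset G ->
          (pi_le H K <-> TC2_le (f H) (f K))].

(* Every element of D_n outside the rotation subgroup C = <r> is an
   involution, so pi_e(H) consists of the divisors of |H :&: C|, together with 2
   exactly when H is not contained in C.  As n is odd, 2 never divides
   |H :&: C|, hence H |-> (|H :&: C|, [H not in C]) turns inclusion of the pi_e
   into the componentwise order of T(n) x C_2; the subgroups <r^(n/d)> and
   <r^(n/d), s> realise every pair.  That the presented group has order 2n
   (so #[r] = n and s \notin <r>) follows by mapping it onto the dihedral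
   group of order 2n, or onto Z_2 when n = 1. *)

From mathcomp Require Import all_boot all_fingroup all_solvable zmodp zify.
Set Implicit Arguments. Unset Strict Implicit. Unset Printing Implicit Defensive.
Local Open Scope group_scope.

Lemma pi_eP (gT : finGroupType) (H : {set gT}) m :
  reflect (exists2 x, x \in H & #[x] = m) (m \in pi_e H).
Proof.
apply: (iffP mapP) => [[x xH ->] | [x xH <-]]; by exists x; rewrite ?mem_enum in xH *.
Qed.

Lemma mem_pi_e_cyclic (gT : finGroupType) (D : {group gT}) m :
  cyclic D -> (m \in pi_e D) = (m %| #|D|).
Proof.
case/cyclicP=> y defD; apply/pi_eP/idP => [[x xD <-] | dvd_m].
  exact: order_dvdG.
rewrite defD -orderE in dvd_m; exists (y ^+ (#[y] %/ m)).
  by rewrite defD mem_cycle.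
by rewrite orderXdiv ?dvdn_div // divnA // mulKn.
Qed.

Lemma expg2_invg_id (gT : finGroupType) (x : gT) : x ^+ 2 = 1 -> x^-1 = x.
Proof. by move=> x2; apply/eqP; rewrite eq_invg_mul -[x * x]/(x ^+ 2) x2. Qed.

Lemma order_eq2 (gT : finGroupType) (x : gT) : x != 1 -> x ^+ 2 = 1 -> #[x] = 2.
Proof.
move=> ntx x2; have: #[x] %| 2 by rewrite order_dvdn x2.
by rewrite dvdn_divisors // !inE order_eq1 (negPf ntx) => /eqP.
Qed.

Section InvolutionsOutsideCyclic.

Variables (gT : finGroupType) (G C : {group gT}).
Hypotheses (cycC : cyclic C) (sCG : C \subset G).
Hypothesis invGC : {in G :\: C, forall x, #[x] = 2}.

Lemma conj_outside_invg : {in C & G :\: C, forall c s, c ^ s = c^-1}.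
Proof.
move=> c s cC sGC; have /setDP[sG sC] := sGC.
have csGC : c * s \in G :\: C.
  rewrite inE (groupM (subsetP sCG c cC) sG) andbT.
  by apply: contra sC => csC; rewrite -(mulKg c s) groupM ?groupV.
have := invg2id (invGC csGC); rewrite invMg (invg2id (invGC sGC)).
by move=> eq_cs; rewrite /conjg -eq_cs mulKg.
Qed.

Lemma mem_pi_e_sub (H : {group gT}) m : H \subset G ->
  (m \in pi_e H) = (m %| #|H :&: C|) || ((m == 2) && ~~ (H \subset C)).
Proof.
move=> sHG; rewrite -mem_pi_e_cyclic ?(cyclicS (subsetIr H C)) //.
apply/pi_eP/orP => [[x xH <-] | [/pi_eP[x /setIP[xH _] <-] | ]].
- case xC: (x \in C); first by left; apply/pi_eP; exists x; rewrite ?inE ?xH.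
  right; rewrite invGC ?inE ?xC ?(subsetP sHG) //=.
  by apply/subsetPn; exists x; rewrite ?xC.
- by exists x.
- case/andP=> /eqP-> /subsetPn[x xH xC].
  by exists x; rewrite // invGC // inE xC (subsetP sHG).
Qed.

Hypothesis oddC : odd #|C|.

Definition TC2_coord (H : {set gT}) : nat * bool := (#|H :&: C|, ~~ (H \subset C)).

Lemma pi_le_TC2_coord (H K : {group gT}) : H \subset G -> K \subset G ->
  pi_le H K <-> TC2_le (TC2_coord H) (TC2_coord K).
Proof.
move=> sHG sKG; have oddI (L : {group gT}) : odd #|L :&: C|.
  by apply: dvdn_odd oddC; apply/cardSg/subsetIr.
rewrite /pi_le /TC2_le /=; split => [leHK | /andP[dvdHK leCK] m].
  apply/andP; split.
    have: #|H :&: C| \in pi_e H by rewrite mem_pi_e_sub // dvdnn.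
    move/leHK; rewrite mem_pi_e_sub // => /orP[// | /andP[/eqP eq2 _]].
    by have := oddI H; rewrite eq2.
  apply/implyP=> nsHC; have := leHK 2.
  rewrite !mem_pi_e_sub // eqxx nsHC orbT => /(_ isT) /orP[dvd2|/andP[//]].
  by have := dvdn_odd dvd2 (oddI K).
rewrite !mem_pi_e_sub // => /orP[dvd_m | /andP[-> /(implyP leCK)->]].
  by rewrite (dvdn_trans dvd_m dvdHK).
by rewrite orbT.
Qed.

Lemma TC2_coord_onto d b : C \proper G -> d %| #|C| ->
  exists2 H : {group gT}, H \subset G & TC2_coord H = (d, b).
Proof.
case/properP=> _ [s sG sC]; rewrite -mem_pi_e_cyclic // => /pi_eP[y yC oy].
have syC : <[y]> \subset C by rewrite cycle_subG.
have sGC : s \in G :\: C by rewrite inE sG sC.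
case: b.
  exists (<[y]> <*> <[s]>)%G; first by rewrite join_subG (subset_trans syC) ?cycle_subG.
  have nys : <[s]> \subset 'N(<[y]>).
    by rewrite norms_cycle conj_outside_invg // groupV cycle_id.
  have tiSC : <[s]> :&: C = 1.
    by apply: coprime_TIg; rewrite -orderE invGC // coprime2n.
  rewrite /TC2_coord /= norm_joinEr // -group_modl // tiSC mulg1 -orderE oy.
  congr (_, _); apply/subsetPn; exists s => //.
  by rewrite (subsetP (mulG_subr _ _)) ?cycle_id.
exists <[y]>%G; first exact: subset_trans syC sCG.
by rewrite /TC2_coord /= (setIidPl syC) -orderE oy syC.
Qed.

End InvolutionsOutsideCyclic.

Theorem Pi_tilde_iso_TC2_involutions_outside_cyclic
    (gT : finGroupType) (G C : {group gT}) :
    cyclic C -> C \proper G -> {in G :\: C, forall x, #[x] = 2} -> odd #|C| ->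
  Pi_tilde_iso_TC2 G #|C|.
Proof.
move=> cycC ltCG invGC oddC; have sCG := proper_sub ltCG.
exists (fun H : {group gT} => TC2_coord C H); split.
- by move=> H _; apply/cardSg/subsetIr.
- by move=> d b; apply: TC2_coord_onto.
- exact: pi_le_TC2_coord.
Qed.

Lemma Zp2_homg_Grp_dihedral1 :
  [set: 'Z_2] \homg Grp (r : s : r ^+ 1, s ^+ 2, s * r * s^-1 = r^-1).
Proof.
apply/existsP; exists (1, Zp1); rewrite /= !xpair_eqE /= mulg1 mulgV invg1 eqxx.
by rewrite cycle1 joing1G eqEcard subsetT cardsT card_ord -orderE order_Zp1.
Qed.

Lemma dihedral_homg_Grp_dihedral n : 1 < n ->
  [set: 'D_n.*2] \homg Grp (r : s : r ^+ n, s ^+ 2, s * r * s^-1 = r^-1).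
Proof.
move=> n_gt1; have := isoGrp_hom (Grp_dihedral n_gt1).
case/existsP=> -[x y] /= /eqP[defD xn y2 xy].
apply/existsP; exists (x, y); rewrite /= !xpair_eqE /= defD xn y2 !eqxx /=.
by rewrite -xy /conjg (expg2_invg_id y2) mulgA.
Qed.

Lemma card_Grp_dihedral_dvd n (gT : finGroupType) (G : {group gT}) : 0 < n ->
  G \isog Grp (r : s : r ^+ n, s ^+ 2, s * r * s^-1 = r^-1) -> n.*2 %| #|G|.
Proof.
move=> n_gt0 isoG; have [n_le1 | n_gt1] := leqP n 1.
  have n1 : n = 1%N by lia.
  have homZ2 : [set: 'Z_2] \homg G by rewrite isoG n1; apply: Zp2_homg_Grp_dihedral1.
  by have := card_homg homZ2; rewrite cardsT card_ord n1.
rewrite -card_dihedral //; apply: card_homg.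
by rewrite isoG; apply: dihedral_homg_Grp_dihedral.
Qed.

Section DihedralGenerators.

Variables (gT : finGroupType) (r s : gT).
Hypotheses (s2 : s ^+ 2 = 1) (srs : s * r * s^-1 = r^-1).

Lemma conj_cycle_invg : {in <[r]>, forall c, c ^ s = c^-1}.
Proof.
have rs : r ^ s = r^-1 by rewrite -srs /conjg (expg2_invg_id s2) mulgA.
by move=> _ /cycleP[i ->]; rewrite conjXg rs expgVn.
Qed.

Lemma norm_cycle_inv : <[s]> \subset 'N(<[r]>).
Proof. by rewrite norms_cycle conj_cycle_invg ?groupV ?cycle_id. Qed.

Lemma order_outside_cycle : {in <[r]> <*> <[s]> :\: <[r]>, forall x, #[x] = 2}.
Proof.
move=> x /setDP[]; rewrite norm_joinEr ?norm_cycle_inv // => /imset2P[c t cr ts ->] ctr.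
have tr : t \notin <[r]> by apply: contra ctr; apply: groupM.
have nt1 : t != 1 by apply: contraNneq tr => ->; apply: group1.
have def_t : t = s.
  have ns1 : s != 1 by apply: contraNneq nt1 => s1; move: ts; rewrite s1 /= cycle1 inE.
  by move: ts; rewrite /= (cycle2g (order_eq2 ns1 s2)) !inE (negPf nt1) => /eqP.
subst t; apply: order_eq2; first by apply: contraNneq ctr => ->; apply: group1.
have sq_cs : (c * s) ^+ 2 = c * c ^ s.
  by rewrite /conjg (expg2_invg_id s2) expgS expg1 !mulgA.
by rewrite sq_cs conj_cycle_invg // mulgV.
Qed.

End DihedralGenerators.

Lemma Grp_dihedral_generators n (gT : finGroupType) (G : {group gT}) : 0 < n ->
    G \isog Grp (r : s : r ^+ n, s ^+ 2, s * r * s^-1 = r^-1) ->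
  exists r s : gT, [/\ G :=: <[r]> <*> <[s]>, #[r] = n, s \notin <[r]>,
                       s ^+ 2 = 1 & s * r * s^-1 = r^-1].
Proof.
move=> n_gt0 isoG; have dvd_nG := card_Grp_dihedral_dvd n_gt0 isoG.
have /existsP[[r s] /= /eqP[defG rn s2 srs]] := isoGrp_hom isoG.
have cardG : (#[r] * #[s] = #|G| * #|<[r]> :&: <[s]>|)%N.
  by rewrite -defG norm_joinEr ?norm_cycle_inv // -mul_cardG.
have le_r : #[r] <= n by apply: dvdn_leq n_gt0 _; rewrite order_dvdn rn.
have le_s : #[s] <= 2 by apply: dvdn_leq; rewrite ?order_dvdn ?s2.
have le_G : 2 * n <= #|G| by rewrite mul2n; apply: dvdn_leq.
have gt0_I : 0 < #|<[r]> :&: <[s]>| by rewrite cardG_gt0.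
have [ord_r [ord_s tiI]] : #[r] = n /\ #[s] = 2 /\ #|<[r]> :&: <[s]>| = 1%N
  by nia.
exists r, s; split => //.
by apply/negP => sr; move: tiI; rewrite (setIidPr _) ?cycle_subG // -orderE ord_s.
Qed.

Theorem theorem2p6 (n : nat) (gT : finGroupType) (G : {group gT}) :
  0 < n -> odd n ->
  G \isog Grp (r : s : r ^+ n, s ^+ 2, s * r * s^-1 = r^-1) ->
  Pi_tilde_iso_TC2 G n.
Proof.
move=> n_gt0 odd_n isoG.
have [r [s [defG ord_r sr s2 srs]]] := Grp_dihedral_generators n_gt0 isoG.
rewrite -ord_r orderE; apply: Pi_tilde_iso_TC2_involutions_outside_cyclic.
- exact: cycle_cyclic.
- apply/properP; rewrite defG joing_subl; split => //.
  by exists s; rewrite // (subsetP (joing_subr _ _)) ?cycle_id.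
- by rewrite defG; apply: order_outside_cycle.
- by rewrite -orderE ord_r.
Qed.
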